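(* Let $X_1,X_2,\dots$ be independent non-negative random variables and $a_1,a_2,\dots>0$. Assume there exist $b,K>0$ such that $\mathbb P(X_i\le x)\le Kx^b$ for all $i\ge1$ and all $x>0$. Then for every $p\in[1,\infty)$ with $p/b\notin\mathbb Z$, setting $n=\lceil p/b\rceil$, there exists $C=C(b,K,p)>0$ (not depending on the $a_i$) such that $$\mathbb E\Big[\Big(\sum_{i=1}^na_iX_i\Big)^{-p}\Big]\le C\,a_1^{-b}\cdots a_{n-1}^{-b}\,a_n^{-p+b(n-1)}.$$ *)

From HB Require Import structures.
From mathcomp Require Import all_boot all_order all_algebra.
From mathcomp Require Import all_classical all_reals all_analysis.
Set Implicit Arguments. Unset Strict Implicit. Unset Printing Implicit Defensive.
Import Order.TTheory GRing.Theory Num.Theory.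
Local Open Scope classical_set_scope.
Local Open Scope ring_scope.

Definition mutually_independent (d : measure_display) (T : measurableType d)
  (R : realType) (P : probability T R) (X : nat -> T -> R) : Prop :=
  forall (J : seq nat) (B : nat -> set R), uniq J ->
    (forall i, i \in J -> measurable (B i)) ->
    P (\big[setI/setT]_(i <- J) (X i @^-1` B i)) =
    (\prod_(i <- J) P (X i @^-1` B i))%E.

Definition neg_pow (R : realType) (p : R) (y : R) : \bar R :=
  if 0 < y then ((y `^ (- p))%:E) else +oo%E.

From HB Require Import structures.
From mathcomp Require Import all_boot all_order all_algebra.
From mathcomp Require Import all_classical all_reals all_analysis.
From mathcomp Require Import ring.
Import Order.TTheory GRing.Theory Num.Theory.
Local Open Scope classical_set_scope.
Local Open Scope ring_scope.
Import measurable_realfun.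

(* Put c = a_n and S = a_1 X_1 + ... + a_n X_n. Covering (0, oo) by the dyadic
   shells (c 2^k, c 2^(k+1)] and (c 2^-(k+1), c 2^-k] gives
     E[S^-p] <= sum_k (c 2^k)^-p P(S <= c 2^(k+1)) + sum_k (c 2^-(k+1))^-p P(S <= c 2^-k).
   By independence and nonnegativity, P(S <= s) <= prod_i P(X_i <= s / a_i)
   <= prod_(i < n) K (s / a_i)^b * min (1, K (s / c)^b). Bounding the last factor
   by 1 on the large shells and by K (s / c)^b on the small ones turns both series
   into geometric series, of ratios 2^(b(n-1) - p) and 2^(p - bn); these are < 1
   precisely because b(n-1) < p < bn, which is where p / b is not an integer. *)

Lemma absz_ceil_bounds {R : realType} (x : R) : 0 < x -> ~ (x \is a Num.int) ->
  [/\ (0 < `|Num.ceil x|)%N, (`|Num.ceil x|%N.-1)%:R < x & x < (`|Num.ceil x|%N)%:R].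
Proof.
move=> x0 x_nint; have c0 : 0 < Num.ceil x by rewrite ceil_gt0.
have nE : (`|Num.ceil x|%N)%:R = (Num.ceil x)%:~R :> R by rewrite natr_absz gtr0_norm.
have [lt_x le_x] := andP (ceil_itv x).
have n_gt0 : (0 < `|Num.ceil x|)%N by rewrite -(@ltr0n R) nE ltr0z.
split => //; last first.
  rewrite nE lt_neqAle le_x andbT; apply/negP => /eqP xE; apply: x_nint.
  by rewrite intrEceil -xE.
by rewrite -subn1 natrB // nE; move: lt_x; rewrite rmorphB.
Qed.

Section powR_arith.
Context {R : realType}.
Implicit Types (x c e r s b p : R).

Lemma gt0_powRD x r s : 0 < x -> x `^ (r + s) = x `^ r * x `^ s.
Proof. by move=> x0; rewrite powRD // (gt_eqF x0) implybT. Qed.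

Lemma powRrMn x e m : x `^ (e * m%:R) = (x `^ e) ^+ m.
Proof. by rewrite powRrM powR_mulrn // powR_ge0. Qed.

Lemma powRXn x e k : 0 <= x -> (x ^+ k) `^ e = (x `^ e) ^+ k.
Proof. by move=> x0; rewrite -powR_mulrn // -powRrM mulrC powRrMn. Qed.

Lemma powRVx x e : 0 < x -> (x^-1) `^ e = x `^ (- e).
Proof. by move=> x0; rewrite -powR_inv1 ?ltW// -powRrM mulN1r. Qed.

Lemma ler_powRN p x y : 0 <= p -> 0 < x -> x <= y -> y `^ (- p) <= x `^ (- p).
Proof.
move=> p0 x0 xy; have y0 := lt_le_trans x0 xy.
rewrite !powRN lef_pV2 ?posrE ?powR_gt0 //.
by apply: ge0_ler_powR => //; rewrite nnegrE ltW.
Qed.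

Lemma powR2_lt1 e : e < 0 -> 2 `^ e < 1.
Proof.
move=> e0; rewrite /powR ifF; last by apply/negbTE; rewrite pnatr_eq0.
by rewrite expR_lt1 nmulr_rlt0 // ln_gt0 // ltr1n.
Qed.

Lemma powR_mul2X c e k : 0 <= c -> (c * 2 ^+ k) `^ e = c `^ e * (2 `^ e) ^+ k.
Proof. by move=> c0; rewrite powRM ?exprn_ge0 // powRXn. Qed.

Lemma powR_div2X c e k : 0 < c -> (c / 2 ^+ k) `^ e = c `^ e * (2 `^ (- e)) ^+ k.
Proof.
move=> c0; rewrite powRM ?ltW ?invr_gt0 ?exprn_gt0 // powRVx ?exprn_gt0 //.
by rewrite powRXn.
Qed.

(* The k-th summands of the two dyadic series once the small-ball bound is inserted:
   each is a fixed multiple of [c ^ (-p + b m)] times a geometric term. *)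
Lemma dyadic_up_termE K b p c A m k : 0 < c ->
  (c * 2 ^+ k) `^ (- p) * ((K * (c * 2 ^+ k.+1) `^ b) ^+ m * A) =
  (K * 2 `^ b) ^+ m * A * c `^ (- p + b * m%:R) * (2 `^ (- p + b * m%:R)) ^+ k.
Proof.
move=> c0.
rewrite exprSr (mulrA c) [(c * _ * 2) `^ b]powRM ?ler0n ?mulr_ge0 ?exprn_ge0 ?ltW //.
transitivity ((K * 2 `^ b) ^+ m * A *
              ((c * 2 ^+ k) `^ (- p) * ((c * 2 ^+ k) `^ b) ^+ m)).
  by rewrite !exprMn; ring.
rewrite -powRrMn -gt0_powRD ?mulr_gt0 ?exprn_gt0 // powR_mul2X ?ltW //; ring.
Qed.

Lemma dyadic_down_termE K b p c A m k : 0 < c ->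
  (c / 2 ^+ k.+1) `^ (- p) *
    ((K * (c / 2 ^+ k) `^ b) ^+ m * A * (K * (c / 2 ^+ k / c) `^ b)) =
  (K * 2 `^ b) ^+ m.+1 * 2 `^ (p - b * m.+1%:R) * A * c `^ (- p + b * m%:R)
    * (2 `^ (p - b * m.+1%:R)) ^+ k.
Proof.
move=> c0; set u := c / 2 ^+ k.+1.
have u0 : 0 < u by rewrite divr_gt0 ?exprn_gt0.
have -> : c / 2 ^+ k = u * 2.
  by rewrite /u exprS; field; rewrite expf_neq0 // pnatr_eq0.
have uE : u = c / 2 ^+ k.+1 by [].
clearbody u.
rewrite [(u * 2 / c) `^ b]powRM ?mulr_ge0 ?invr_ge0 ?ltW // powRVx //.
rewrite !powRM ?ltW ?ler0n //.
transitivity ((K * 2 `^ b) ^+ m.+1 * A * c `^ (- b) *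
              (u `^ (- p) * (u `^ b) ^+ m.+1)).
  by rewrite !exprMn !exprS; ring.
rewrite -powRrMn -gt0_powRD // uE powR_div2X //.
have -> : - (- p + b * m.+1%:R) = p - b * m.+1%:R by ring.
have -> : - p + b * m%:R = (- p + b * m.+1%:R) + - b.
  by rewrite -addn1 natrD; ring.
by rewrite (gt0_powRD c _ (- b) c0) !exprS; ring.
Qed.
End powR_arith.

Section nneseries_facts.
Context {R : realType}.
Local Open Scope ereal_scope.

Lemma nneseries_geometric_le (a z : R) : (0 <= a)%R -> (0 < z)%R -> (z < 1)%R ->
  \sum_(k <oo) (a * z ^+ k)%:E <= (a / (1 - z))%:E.
Proof.
move=> a0 z0 z1.
have -> : \sum_(k <oo) (a * z ^+ k)%:E =
          ereal_sup (range (fun N => \sum_(0 <= k < N) (a * z ^+ k)%:E)).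
  apply/cvg_lim/ereal_nondecreasing_cvgn/ereal_nondecreasing_series => //.
  by move=> k _; rewrite lee_fin mulr_ge0 // exprn_ge0 // ltW.
apply: ge_ereal_sup => _ [N _ <-]; rewrite /= sumEFin lee_fin.
by apply: geometric_le_lim; rewrite // ger0_norm // ltW.
Qed.

Lemma nneseries_ge_term (u : (\bar R)^nat) k : (forall i, 0 <= u i) ->
  u k <= \sum_(i <oo) u i.
Proof. by move=> u0; rewrite (@nneseriesD1 _ u k xpredT) // leeDl // nneseries_ge0. Qed.

Lemma nneseries_ge_cst_pinfty (u : (\bar R)^nat) (m : R) : (0 < m)%R ->
  (forall k, m%:E <= u k) -> \sum_(k <oo) u k = +oo.
Proof.
move=> m0 um; have u0 k : 0 <= u k by rewrite (le_trans _ (um k)) // lee_fin ltW.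
have partial_ge N : (N%:R * m)%:E <= \sum_(k <oo) u k.
  apply: le_trans (nneseries_lim_ge N (fun k _ _ => u0 k)).
  have -> : (N%:R * m)%:E = \sum_(0 <= k < N) m%:E.
    by rewrite sumEFin sumr_const_nat subn0 mulr_natl.
  by apply: lee_sum => k _.
have : 0 <= \sum_(k <oo) u k := nneseries_ge0 (fun k _ _ => u0 k).
case E : (\sum_(k <oo) u k) => [r| |] // r0.
have := partial_ge (Num.bound (r / m)).+1.
rewrite E lee_fin -ler_pdivlMr // leNgt.
have rm0 : (0 <= r / m)%R by rewrite divr_ge0 ?(ltW m0) //; exact: r0.
have lt_bound : (r / m < (Num.bound (r / m)).+1%:R)%R.
  by apply: lt_le_trans (archi_boundP rm0) _; rewrite ler_nat.
by rewrite lt_bound.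
Qed.
End nneseries_facts.

Lemma ex_switch (P : pred nat) : ~~ P 0 -> (exists k, P k) ->
  exists k, ~~ P k && P k.+1.
Proof.
move=> P0 exP; case: (ex_minnP exP) => [[|k] Pk kmin]; first by rewrite Pk in P0.
by exists k; rewrite Pk andbT; apply/negP => /kmin; rewrite ltnn.
Qed.

Section dyadic_decomposition.
Context {R : realType}.
Implicit Types (p c x y : R).

Lemma exists_gt_exp2 x : exists k, x < 2 ^+ k.
Proof.
exists (Num.bound `|x|); apply: le_lt_trans (ler_norm x) _.
apply: lt_trans (archi_boundP (normr_ge0 x)) _.
by rewrite -natrX ltr_nat ltn_expl.
Qed.

Lemma dyadic_bracket_up c y : 0 < c -> c < y ->
  exists k, c * 2 ^+ k < y <= c * 2 ^+ k.+1.
Proof.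
move=> c0 cy; have [k yk] := exists_gt_exp2 (y / c).
have P0 : ~~ (y <= c * 2 ^+ 0) by rewrite expr0 mulr1 -ltNge.
have Pk : y <= c * 2 ^+ k by rewrite mulrC -ler_pdivrMr //; exact: ltW.
have [j /andP[]] := @ex_switch (fun k => y <= c * 2 ^+ k) P0 (ex_intro _ k Pk).
by rewrite -ltNge; exists j; apply/andP.
Qed.

Lemma dyadic_bracket_down c y : 0 < y -> y <= c ->
  exists k, c / 2 ^+ k.+1 < y <= c / 2 ^+ k.
Proof.
move=> y0 yc; have [k ck] := exists_gt_exp2 (c / y).
have P0 : ~~ (c / 2 ^+ 0 < y) by rewrite expr0 divr1 -leNgt.
have Pk : c / 2 ^+ k < y by rewrite ltr_pdivrMr ?exprn_gt0 // mulrC -ltr_pdivrMr.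
have [j /andP[]] := @ex_switch (fun k => c / 2 ^+ k < y) P0 (ex_intro _ k Pk).
by rewrite -leNgt; exists j; apply/andP.
Qed.

(* A point [y > 0] lies in one dyadic shell around the scale [c], where [y^-p] is
   at most the weight of the shell; at [y = 0] the second series diverges. *)
Lemma neg_pow_le_dyadic p c y : 0 <= p -> 0 < c -> 0 <= y ->
  (neg_pow p y <=
     \sum_(k <oo) ((c * 2 ^+ k) `^ (- p) * (y <= c * 2 ^+ k.+1)%R%:R)%:E
   + \sum_(k <oo) ((c / 2 ^+ k.+1) `^ (- p) * (y <= c / 2 ^+ k)%R%:R)%:E)%E.
Proof.
move=> p0 c0 y0.
have up_ge0 k :
    (0 <= ((c * 2 ^+ k) `^ (- p) * (y <= c * 2 ^+ k.+1)%R%:R)%:E)%E.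
  by rewrite lee_fin mulr_ge0 ?powR_ge0 ?ler0n.
have down_ge0 k :
    (0 <= ((c / 2 ^+ k.+1) `^ (- p) * (y <= c / 2 ^+ k)%R%:R)%:E)%E.
  by rewrite lee_fin mulr_ge0 ?powR_ge0 ?ler0n.
have cdown_gt0 k : 0 < c / 2 ^+ k by rewrite divr_gt0 ?exprn_gt0.
rewrite /neg_pow; case: ifPn => [ypos | ]; last first.
  rewrite -leNgt => yle0.
  rewrite [X in (_ + X)%E](@nneseries_ge_cst_pinfty _ _ (c `^ (- p))).
  - by rewrite addey ?leey // gt_eqF // (lt_le_trans _ (nneseries_ge0 _)) ?ltNyr.
  - exact: powR_gt0.
  move=> k; rewrite (le_trans yle0 (ltW (cdown_gt0 k))) mulr1 lee_fin.
  apply: ler_powRN p0 (cdown_gt0 k.+1) _.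
  by rewrite ger_pMr ?invf_le1 ?exprn_ege1 ?ler1n ?exprn_gt0.
have [cy | yc] := ltP c y.
  have [k /andP[lt_y le_y]] := dyadic_bracket_up _ _ c0 cy.
  apply: le_trans (leeDl _ _); last exact: nneseries_ge0.
  rewrite (le_trans _ (nneseries_ge_term _ k up_ge0)) //.
  rewrite le_y mulr1 lee_fin ler_powRN ?mulr_gt0 ?exprn_gt0 //; exact: ltW.
have [k /andP[lt_y le_y]] := dyadic_bracket_down _ _ ypos yc.
apply: le_trans (leeDr _ _); last exact: nneseries_ge0.
rewrite (le_trans _ (nneseries_ge_term _ k down_ge0)) //.
by rewrite le_y mulr1 lee_fin ler_powRN //; exact: ltW.
Qed.
End dyadic_decomposition.

Section integral_dyadic.
Context d (T : measurableType d) (R : realType) (mu : {measure set T -> \bar R}).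
Implicit Types (f : T -> R) (a c p t : R).

Lemma measurable_sublevel f t : measurable_fun setT f -> measurable [set w | f w <= t].
Proof.
move=> mf; rewrite -[X in measurable X]setTI.
exact: measurable_fun_le (measurable_cst t).
Qed.

Lemma indic_sublevel f t w : \1_[set w | f w <= t] w = (f w <= t)%R%:R :> R.
Proof.
rewrite indicE; case: (boolP (f w <= t)) => h; first by rewrite mem_set.
by rewrite memNset //; apply/negP.
Qed.

Lemma measurable_scaled_sublevel f a t : measurable_fun setT f ->
  measurable_fun setT (fun w => (a * (f w <= t)%R%:R)%:E).
Proof.
move=> mf; apply/measurable_EFinP.
under eq_fun do rewrite -indic_sublevel.
by apply: measurable_funM => //; exact/measurable_indic/measurable_sublevel.
Qed.

Lemma integral_scaled_sublevel f a t : measurable_fun setT f -> 0 <= a ->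
  (\int[mu]_w (a * (f w <= t)%R%:R)%:E = a%:E * mu [set w | (f w <= t)%R])%E.
Proof.
move=> mf a0; under eq_integral do rewrite -indic_sublevel EFinM.
rewrite ge0_integralZl //; last first.
  by apply/measurable_EFinP; exact/measurable_indic/measurable_sublevel.
by rewrite integral_indic ?setIT //; exact: measurable_sublevel.
Qed.

Lemma measurable_neg_pow f p : measurable_fun setT f ->
  measurable_fun setT (fun w => neg_pow p (f w)).
Proof.
move=> mf; apply: measurable_fun_ifT.
- exact: measurable_fun_ltr (measurable_cst _) mf.
- by apply/measurable_EFinP; exact: measurableT_comp (measurable_powR _) mf.
- exact: measurable_cst.
Qed.

Lemma integral_neg_pow_le_dyadic (S : T -> R) p c : measurable_fun setT S ->
  (forall w, 0 <= S w) -> 0 <= p -> 0 < c ->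
  (\int[mu]_w neg_pow p (S w) <=
     \sum_(k <oo) ((c * 2 ^+ k) `^ (- p))%:E * mu [set w | (S w <= c * 2 ^+ k.+1)%R]
   + \sum_(k <oo) ((c / 2 ^+ k.+1) `^ (- p))%:E * mu [set w | (S w <= c / 2 ^+ k)%R])%E.
Proof.
move=> mS S0 p0 c0.
pose up k w := ((c * 2 ^+ k) `^ (- p) * (S w <= c * 2 ^+ k.+1)%R%:R)%:E.
pose down k w := ((c / 2 ^+ k.+1) `^ (- p) * (S w <= c / 2 ^+ k)%R%:R)%:E.
have up_ge0 k w : (0 <= up k w)%E by rewrite lee_fin mulr_ge0 ?powR_ge0 ?ler0n.
have down_ge0 k w : (0 <= down k w)%E by rewrite lee_fin mulr_ge0 ?powR_ge0 ?ler0n.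
have mup k : measurable_fun setT (up k) by exact: measurable_scaled_sublevel.
have mdown k : measurable_fun setT (down k) by exact: measurable_scaled_sublevel.
have neg_pow_ge0 w : (0 <= neg_pow p (S w))%E.
  by rewrite /neg_pow; case: ifP => _; rewrite ?leey ?lee_fin ?powR_ge0.
have mdyadic : measurable_fun setT
    (fun w => \sum_(k <oo) up k w + \sum_(k <oo) down k w)%E.
  by apply: emeasurable_funD; exact: ge0_emeasurable_sum.
apply: le_trans (@ge0_le_integral _ _ _ mu _ measurableT _ _
  (fun w _ => neg_pow_ge0 w) (measurable_neg_pow S p mS) mdyadic
  (fun w _ => neg_pow_le_dyadic _ _ _ p0 c0 (S0 w))) _.
rewrite ge0_integralD //; first last.
- exact: ge0_emeasurable_sum.
- by move=> w _; exact: nneseries_ge0.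
- exact: ge0_emeasurable_sum.
- by move=> w _; exact: nneseries_ge0.
rewrite (integral_nneseries _ _ mup) ?(integral_nneseries _ _ mdown) //.
apply: leeD; apply: lee_nneseries => k *.
- by apply: integral_ge0 => w _; exact: up_ge0.
- by rewrite integral_scaled_sublevel ?powR_ge0.
- by apply: integral_ge0 => w _; exact: down_ge0.
- by rewrite integral_scaled_sublevel ?powR_ge0.
Qed.
End integral_dyadic.

Lemma lee_prod {R : realType} (I : Type) (s : seq I) (P : pred I) (f g : I -> \bar R) :
  (forall i, P i -> 0 <= f i <= g i)%E ->
  (\prod_(i <- s | P i) f i <= \prod_(i <- s | P i) g i)%E.
Proof.
move=> fg; elim: s => [|i s IH]; rewrite ?big_nil // !big_cons.
case: ifP => Pi //; have /andP[fi0 fgi] := fg i Pi.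
by apply: lee_pmul => //; apply: prode_ge0 => j /fg /andP[].
Qed.

Lemma prod_mul_powR_div {R : realType} (K b s : R) (a : nat -> R) m : 0 <= s ->
  (forall i, (0 < i)%N -> 0 < a i) ->
  \prod_(1 <= i < m) (K * (s / a i) `^ b) =
  (K * s `^ b) ^+ m.-1 * \prod_(1 <= i < m) a i `^ (- b).
Proof.
move=> s0 a_gt0; rewrite -subn1 -prodr_const_nat -big_split /=.
apply: eq_big_nat => i /andP[i_gt0 _].
have ai := a_gt0 i i_gt0.
by rewrite powRM ?invr_ge0 ?(ltW ai) // powRVx // mulrA.
Qed.

Definition neg_moment_const {R : realType} (b K p : R) (n : nat) : R :=
  (K * 2 `^ b) ^+ n.-1 / (1 - 2 `^ (- p + b * n.-1%:R))
  + (K * 2 `^ b) ^+ n * 2 `^ (p - b * n%:R) / (1 - 2 `^ (p - b * n%:R)).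

Lemma neg_moment_const_gt0 {R : realType} (b K p : R) n : 0 < K ->
  b * n.-1%:R < p -> p < b * n%:R -> 0 < neg_moment_const b K p n.
Proof.
move=> K0 p_lo p_hi; have Kb0 : 0 < K * 2 `^ b by rewrite mulr_gt0 ?powR_gt0.
by rewrite addr_gt0 ?divr_gt0 ?mulr_gt0 ?exprn_gt0 ?powR_gt0 // subr_gt0 powR2_lt1 //
  ?subr_lt0 // addrC subr_lt0.
Qed.

Section neg_moment_of_sum.
Context d (T : measurableType d) {R : realType} (P : probability T R).
Variables (X : nat -> T -> R) (a : nat -> R) (b K : R) (n : nat).
Hypothesis mX : forall i, measurable_fun setT (X i).
Hypothesis indep : mutually_independent P X.
Hypothesis X_ge0 : forall i w, 0 <= X i w.
Hypothesis a_gt0 : forall i, (0 < i)%N -> 0 < a i.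
Hypothesis small_ball : forall i x, (0 < i)%N -> 0 < x ->
  (P [set w | (X i w <= x)%R] <= (K * x `^ b)%:E)%E.
Hypothesis n_gt0 : (0 < n)%N.
Hypothesis K_ge0 : 0 <= K.

Let S w := \sum_(1 <= i < n.+1) a i * X i w.
Let A := \prod_(1 <= i < n) a i `^ (- b).

Let A_ge0 : 0 <= A.
Proof. by apply: prodr_ge0 => i _; exact: powR_ge0. Qed.

Let measurable_S : measurable_fun setT S.
Proof.
by apply: measurable_sum => i; apply: measurable_funM => //; exact: measurable_cst.
Qed.

(* Each summand is at most the sum, so [S <= s] forces every [X_i <= s / a_i]. *)
Lemma small_ball_sum_le_prod s :
  (P [set w | (S w <= s)%R] <=
   \prod_(1 <= i < n.+1) P [set w | (X i w <= s / a i)%R])%E.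
Proof.
have iotaE : index_iota 1 n.+1 = iota 1 n by rewrite /index_iota subSS subn0.
have mB i : measurable [set x : R | x <= s / a i].
  by rewrite -[X in measurable X]setTI; exact: measurable_fun_le.
rewrite iotaE -(indep _ _ (iota_uniq 1 n) (fun i _ => mB i)).
apply: le_measure; rewrite ?inE.
- exact: measurable_sublevel.
- by apply: bigsetI_measurable => i _; exact: measurable_sublevel.
move=> w /= Sw; rewrite -bigcap_seq => i /=; rewrite mem_iota => /andP[i_gt0 i_lt].
rewrite ler_pdivlMr ?a_gt0 // mulrC; apply: le_trans Sw.
rewrite /S iotaE (bigD1_seq i) ?mem_iota ?i_gt0 ?i_lt ?iota_uniq //=.
rewrite lerDl big_seq_cond sumr_ge0 // => j /andP[+ _].
rewrite mem_iota => /andP[j_gt0 _].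
by rewrite mulr_ge0 // ltW // a_gt0.
Qed.

Lemma small_ball_sum_le s : 0 < s ->
  (P [set w | (S w <= s)%R] <=
   ((K * s `^ b) ^+ n.-1 * A)%:E * P [set w | (X n w <= s / a n)%R])%E.
Proof.
move=> s0; apply: le_trans (small_ball_sum_le_prod s) _.
rewrite big_nat_recr //= -(prod_mul_powR_div K b s a n (ltW s0) a_gt0) -prodEFin.
apply: lee_wpmul2r; first exact: measure_ge0.
rewrite big_nat_cond [X in (_ <= X)%E]big_nat_cond.
apply: lee_prod => i /andP[/andP[i_gt0 _] _]; rewrite measure_ge0 /=.
by apply: small_ball; rewrite ?divr_gt0 ?a_gt0.
Qed.

Variable p : R.
Hypotheses (p_ge0 : 0 <= p) (p_lo : b * n.-1%:R < p) (p_hi : p < b * n%:R).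

Let c := a n.
Let e := - p + b * n.-1%:R.
Let c_gt0 : 0 < c. Proof. exact: a_gt0. Qed.

Lemma dyadic_up_term_le k :
  (((c * 2 ^+ k) `^ (- p))%:E * P [set w | (S w <= c * 2 ^+ k.+1)%R] <=
   ((K * 2 `^ b) ^+ n.-1 * A * c `^ e * (2 `^ e) ^+ k)%:E)%E.
Proof.
have s_gt0 : 0 < c * 2 ^+ k.+1 by rewrite mulr_gt0 ?exprn_gt0.
apply: le_trans (lee_wpmul2l _ (small_ball_sum_le _ s_gt0)) _.
  by rewrite lee_fin powR_ge0.
rewrite -dyadic_up_termE // [in X in (_ <= X)%E]EFinM.
apply: lee_wpmul2l; first by rewrite lee_fin powR_ge0.
rewrite -[X in (_ <= X)%E]mule1; apply: lee_wpmul2l.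
  by rewrite lee_fin mulr_ge0 ?exprn_ge0 ?mulr_ge0 ?powR_ge0.
by apply: probability_le1; exact: measurable_sublevel.
Qed.

Lemma dyadic_down_term_le k :
  (((c / 2 ^+ k.+1) `^ (- p))%:E * P [set w | (S w <= c / 2 ^+ k)%R] <=
   ((K * 2 `^ b) ^+ n * 2 `^ (p - b * n%:R) * A * c `^ e
     * (2 `^ (p - b * n%:R)) ^+ k)%:E)%E.
Proof.
have s_gt0 : 0 < c / 2 ^+ k by rewrite divr_gt0 ?exprn_gt0.
apply: le_trans (lee_wpmul2l _ (small_ball_sum_le _ s_gt0)) _.
  by rewrite lee_fin powR_ge0.
have := dyadic_down_termE K b p c A n.-1 k c_gt0; rewrite prednK // => <-.
rewrite [in X in (_ <= X)%E]EFinM.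
apply: lee_wpmul2l; first by rewrite lee_fin powR_ge0.
rewrite [in X in (_ <= X)%E]EFinM; apply: lee_wpmul2l.
  by rewrite lee_fin mulr_ge0 ?exprn_ge0 ?mulr_ge0 ?powR_ge0.
by apply: small_ball; rewrite ?divr_gt0.
Qed.

Lemma integral_neg_pow_sum_le :
  (\int[P]_w neg_pow p (S w) <= (neg_moment_const b K p n * A * c `^ e)%:E)%E.
Proof.
have S_ge0 w : 0 <= S w.
  rewrite /S big_nat sumr_ge0 // => i /andP[i_gt0 _].
  by rewrite mulr_ge0 ?X_ge0 // ltW ?a_gt0.
have z1_lt1 : 2 `^ e < 1 by rewrite powR2_lt1 // /e addrC subr_lt0.
have z2_lt1 : 2 `^ (p - b * n%:R) < 1 by rewrite powR2_lt1 // subr_lt0.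
apply: le_trans (integral_neg_pow_le_dyadic _ _ _ P _ _ _
  measurable_S S_ge0 p_ge0 c_gt0) _.
have -> : neg_moment_const b K p n * A * c `^ e =
    (K * 2 `^ b) ^+ n.-1 * A * c `^ e / (1 - 2 `^ e) +
    (K * 2 `^ b) ^+ n * 2 `^ (p - b * n%:R) * A * c `^ e
      / (1 - 2 `^ (p - b * n%:R)).
  by rewrite /neg_moment_const; field; rewrite !subr_eq0 ?gt_eqF.
have Kb_ge0 : 0 <= K * 2 `^ b by rewrite mulr_ge0 ?powR_ge0.
have pow2_gt0 (r : R) : 0 < 2 `^ r by rewrite powR_gt0.
rewrite EFinD; apply: leeD.
- have coef_ge0 : 0 <= (K * 2 `^ b) ^+ n.-1 * A * c `^ e.
    by rewrite !mulr_ge0 ?exprn_ge0 ?powR_ge0.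
  apply: le_trans (nneseries_geometric_le _ _ coef_ge0 (pow2_gt0 _) z1_lt1).
  apply: lee_nneseries => [k _ _|k _]; last exact: dyadic_up_term_le.
  by rewrite mule_ge0 ?lee_fin ?powR_ge0 ?measure_ge0.
- have coef_ge0 : 0 <= (K * 2 `^ b) ^+ n * 2 `^ (p - b * n%:R) * A * c `^ e.
    by rewrite !mulr_ge0 ?exprn_ge0 ?powR_ge0.
  apply: le_trans (nneseries_geometric_le _ _ coef_ge0 (pow2_gt0 _) z2_lt1).
  apply: lee_nneseries => [k _ _|k _]; last exact: dyadic_down_term_le.
  by rewrite mule_ge0 ?lee_fin ?powR_ge0 ?measure_ge0.
Qed.
End neg_moment_of_sum.

Theorem mainTheorem11 (R : realType) (b K p : R) :
  0 < b -> 0 < K -> 1 <= p -> ~ (p / b \is a Num.int) ->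
  let n := `| Num.ceil (p / b) |%N in
  exists C : R, 0 < C /\
    forall (d : measure_display) (T : measurableType d)
      (P : probability T R) (X : nat -> T -> R) (a : nat -> R),
      (forall i, measurable_fun setT (X i)) ->
      mutually_independent P X ->
      (forall i w, 0 <= X i w) ->
      (forall i, (0 < i)%N -> 0 < a i) ->
      (forall i (x : R), (0 < i)%N -> 0 < x ->
         (P [set w | (X i w <= x)%R] <= (K * x `^ b)%:E)%E) ->
      (\int[P]_w neg_pow p (\sum_(1 <= i < n.+1) a i * X i w)
        <= (C * (\prod_(1 <= i < n) a i `^ (- b))
              * a n `^ (- p + b * (n.-1)%:R))%:E)%E.
Proof.
move=> b_gt0 K_gt0 p_ge1 p_nint n.
have p_gt0 : 0 < p := lt_le_trans ltr01 p_ge1.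
have [n_gt0 lo hi] := absz_ceil_bounds _ (divr_gt0 p_gt0 b_gt0) p_nint.
have p_lo : b * n.-1%:R < p by rewrite mulrC -ltr_pdivlMr.
have p_hi : p < b * n%:R by rewrite mulrC -ltr_pdivrMr.
exists (neg_moment_const b K p n); split; first exact: neg_moment_const_gt0.
move=> d T P X a mX indep X_ge0 a_gt0 small_ball.
exact: (integral_neg_pow_sum_le _ _ _ _ _ _ _ _ mX indep X_ge0 a_gt0 small_ball
  n_gt0 (ltW K_gt0) _ (ltW p_gt0) p_lo p_hi).
Qed.
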